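(* Let $\varphi$ be an almost identity PC-map of $\mathrm{UT}(n,F)$ and let $k$ be an integer with $2\le k\le n-3$. If conditions $Z_{k-1}$ and $Y_k$ hold for $\varphi$, then condition $Z_k$ holds for $\varphi$.
   Context: $F$ is a field and $n\in\mathbb N\cup\{\infty\}$. $\mathrm{UT}(n,F)$ is the group of upper unitriangular $n\times n$ matrices over $F$ (for $n=\infty$: all $\mathbb N\times\mathbb N$ matrices with $1$ on the diagonal and $0$ below it). Convention: $\infty+m=\infty$ for $m\in\mathbb Z$. $e$ is the identity matrix, $e_{ij}$ the matrix unit, $t_{ij}(\alpha)=e+\alpha e_{ij}$ ($i<j$). $[x,y]=xyx^{-1}y^{-1}$. A PC-map is a bijection $\varphi$ of the group with $\varphi([x,y])=[\varphi(x),\varphi(y)]$ for all $x,y$; it is almost identity if $\varphi(t_{ij}(\alpha))=t_{ij}(\alpha)$ for all $i<j$, $\alpha\in F$. $C$ denotes the center of $\mathrm{UT}(n,F)$ (trivial if $n=\infty$, equal to $\{t_{1n}(\alpha):\alpha\in F\}$ if $n$ is finite). Conditions: $Y_k$ ($k\le n-3$): for all $\beta,\alpha_1,\dots,\alpha_{k-1}\in F$, the matrix $y=t_{k+1\,k+2}(\beta)\prod_{i=1}^{k-1}t_{ik}(\alpha_i)$ satisfies $\varphi(y)\in yC$. $Z_k$ ($k\le n-3$): for all $\gamma_1,\dots,\gamma_k\in F$, the matrix $z=\prod_{i=1}^{k}t_{i\,k+3}(\gamma_i)$ satisfies $\varphi(z)=z$. (Thus $Z_{k-1}$ says $\varphi$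 fixes every $\prod_{i=1}^{k-1}t_{i\,k+2}(\gamma_i)$.) *)

From HB Require Import structures.
From mathcomp Require Import all_boot all_order all_algebra.
Set Implicit Arguments. Unset Strict Implicit. Unset Printing Implicit Defensive.
Import Order.TTheory GRing.Theory Num.Theory.
Local Open Scope ring_scope.

(* Extended dimension n \in N \cup {oo}: [Some m] = m, [None] = infinity. *)
Definition ext_nat := option nat.

(* Matrices indexed by nat x nat; the paper's indices are 1-based, index 0
   (and indices > n when n is finite) are "outside" and carry identity
   entries. *)
Definition mat (F : fieldType) := nat -> nat -> F.

Section UT.
Variable F : fieldType.

Definition inrange (n : ext_nat) (i : nat) : bool :=
  (1 <= i)%N && (if n is Some m then (i <= m)%N else true).

Definition ext_le (i : nat) (n : ext_nat) : bool :=
  if n is Some m then (i <= m)%N else true.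

Definition e : mat F := fun i j => (i == j)%:R.

Definition unit_mx (i j : nat) : mat F := fun a b => ((a == i) && (b == j))%:R.

(* product of (upper triangular) matrices: (AB)_ij = sum_{i<=k<=j} A_ik B_kj
   (a finite sum, so it makes sense also for N x N upper triangular matrices) *)
Definition mmul (A B : mat F) : mat F :=
  fun i j => \sum_(i <= k < j.+1) A i k * B k j.

Definition mpow (A : mat F) (m : nat) : mat F := iter m (mmul A) e.

(* inverse of a unitriangular matrix A = e + N : sum_m (-N)^m (finite in each
   entry since N is strictly upper triangular) *)
Definition minv (A : mat F) : mat F :=
  fun i j => \sum_(m < (j - i).+1) mpow (fun a b => e a b - A a b) m i j.

Definition isUT (n : ext_nat) (A : mat F) : Prop :=
  (forall i, A i i = 1) /\
  (forall i j, i != j -> ~~ [&& (i < j)%N, inrange n i & inrange n j] ->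
     A i j = 0).

Definition t (i j : nat) (alpha : F) : mat F :=
  fun a b => e a b + alpha * unit_mx i j a b.

Definition comm (x y : mat F) : mat F :=
  mmul (mmul x y) (mmul (minv x) (minv y)).

Definition PCmap (n : ext_nat) (phi : mat F -> mat F) : Prop :=
  (forall x, isUT n x -> isUT n (phi x)) /\
  (forall x y, isUT n x -> isUT n y -> phi x = phi y -> x = y) /\
  (forall y, isUT n y -> exists x, isUT n x /\ phi x = y) /\
  (forall x y, isUT n x -> isUT n y -> phi (comm x y) = comm (phi x) (phi y)).

Definition almost_identity (n : ext_nat) (phi : mat F -> mat F) : Prop :=
  forall i j (alpha : F), (1 <= i)%N -> (i < j)%N -> inrange n j ->
    phi (t i j alpha) = t i j alpha.

Definition inCenter (n : ext_nat) (c : mat F) : Prop :=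
  if n is Some m then exists alpha : F, c = t 1 m alpha else c = e.

Definition condY (n : ext_nat) (phi : mat F -> mat F) (k : nat) : Prop :=
  forall (beta : F) (alpha : nat -> F),
    let y := mmul (t k.+1 k.+2 beta) (\big[mmul/e]_(1 <= i < k) t i k (alpha i)) in
    exists c, inCenter n c /\ phi y = mmul y c.

Definition condZ (phi : mat F -> mat F) (k : nat) : Prop :=
  forall gamma : nat -> F,
    let z := \big[mmul/e]_(1 <= i < k.+1) t i (k + 3) (gamma i) in
    phi z = z.

End UT.

(* Every matrix in the argument is e + X with X strictly upper triangular and X X = 0, and for
   such X the commutator with a transvection is explicit:
     [e + X, t_jl(1)] = e + X e_jl - e_jl X - X e_jl X.
   Let z = prod_(i<=k) t_(i,k+3)(gamma_i).  If gamma_k = 0, z is the commutator of an element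
   of Z_(k-1) with t_(k+2,k+3)(1).  Otherwise take beta = -gamma_k, alpha_i = gamma_i / gamma_k
   in Y_k: phi(y) = y c with c = t_(1,m)(a), m >= k+3, and the formula shows that c does not
   affect v := [y c, t_(k,k+1)(1)]; hence phi fixes v, and z = [v, t_(k+2,k+3)(1)]. *)
From Pilot Require Import Defs.
From HB Require Import structures.
From mathcomp Require Import all_boot all_order all_algebra.
From mathcomp Require Import zify ring.
From Stdlib Require Import FunctionalExtensionality.

Set Implicit Arguments.
Unset Strict Implicit.
Unset Printing Implicit Defensive.
Import GRing.Theory.
Local Open Scope ring_scope.

#[local] Hint Extern 0 (is_true (_ <= _)%N) => lia : core.
#[local] Hint Extern 0 (is_true ((_ <= _)%N && _)) => lia : core.
#[local] Hint Extern 0 (@eq nat _ _) => lia : core.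

Ltac index_cases :=
  repeat match goal with
  | |- context [ @eq_op _ ?a ?b ] =>
      lazymatch type of a with nat => idtac end;
      case: (eqVneq a b) => ?; try subst; try (exfalso; lia)
  | |- context [ (?a <= ?b)%N ] => case: (leqP a b) => ?; try (exfalso; lia)
  end; rewrite /=.

Section MatrixAlgebra.
Variable F : fieldType.
Local Notation mat := (mat F).
Local Notation e := (e F).

Definition madd (A B : mat) : mat := fun p q => A p q + B p q.
Definition mopp (A : mat) : mat := fun p q => - A p q.
Definition mzero : mat := fun _ _ => 0.
Definition strictly_upper (X : mat) := forall p q, (q <= p)%N -> X p q = 0.

Lemma mat_ext (A B : mat) : (forall p q, A p q = B p q) -> A = B.
Proof. by move=> eqAB; do 2!apply: functional_extensionality => ?; apply: eqAB. Qed.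

Lemma maddr0 A : madd A mzero = A.
Proof. by apply: mat_ext => p q; rewrite /madd addr0. Qed.

Lemma mmulDl A B C : mmul (madd A B) C = madd (mmul A C) (mmul B C).
Proof.
by apply: mat_ext => p q; rewrite /mmul /madd -big_split; apply: eq_bigr => r _; apply: mulrDl.
Qed.

Lemma mmulDr A B C : mmul A (madd B C) = madd (mmul A B) (mmul A C).
Proof.
by apply: mat_ext => p q; rewrite /mmul /madd -big_split; apply: eq_bigr => r _; apply: mulrDr.
Qed.

Lemma mmulNl A B : mmul (mopp A) B = mopp (mmul A B).
Proof.
by apply: mat_ext => p q; rewrite /mmul /mopp -sumrN; apply: eq_bigr => r _; apply: mulNr.
Qed.

Lemma mmulNr A B : mmul A (mopp B) = mopp (mmul A B).
Proof.
by apply: mat_ext => p q; rewrite /mmul /mopp -sumrN; apply: eq_bigr => r _; apply: mulrN.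
Qed.

Lemma mmul_eq0 A B : (forall p r q, A p r * B r q = 0) -> mmul A B = mzero.
Proof. by move=> AB0; apply: mat_ext => p q; rewrite /mmul big1. Qed.

Lemma mmul0l A : mmul mzero A = mzero.
Proof. by apply: mmul_eq0 => p r q; apply: mul0r. Qed.

Lemma mmul0r A : mmul A mzero = mzero.
Proof. by apply: mmul_eq0 => p r q; apply: mulr0. Qed.

Lemma mmulA (A B C : mat) : mmul (mmul A B) C = mmul A (mmul B C).
Proof.
apply: mat_ext => p q; rewrite /mmul.
transitivity (\sum_(p <= k < q.+1) \sum_(p <= r < q.+1 | (r <= k)%N) A p r * B r k * C k q).
  apply: eq_big_nat => k /andP[_ kq].
  by rewrite big_distrl (big_nat_widen _ _ _ _ _ kq) /=.
rewrite (exchange_big_dep_nat xpredT) //=; apply: eq_big_nat => r /andP[pr _].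
by rewrite big_distrr (big_nat_widenl _ _ _ _ _ pr) /=; apply: eq_bigr => k _; rewrite mulrA.
Qed.

Lemma sum_nat_delta a b j (c : nat -> F) :
  \sum_(a <= r < b) (r == j)%:R * c r = if (a <= j < b)%N then c j else 0.
Proof.
rewrite (eq_bigr (fun r => if r == j then c r else 0)) => [|r _]; last first.
  by case: eqP; rewrite ?mul1r ?mul0r.
by rewrite -big_mkcond big_nat1_eq.
Qed.

Lemma mmul_e_e : mmul e e = e.
Proof.
apply: mat_ext => p q; rewrite /mmul /e; under eq_bigr do rewrite eq_sym.
by rewrite sum_nat_delta leqnn /=; case: ltnP => // qp; case: eqP => // pq; lia.
Qed.

Lemma mmul1l Y : strictly_upper Y -> mmul e Y = Y.
Proof.
move=> upY; apply: mat_ext => p q; rewrite /mmul /e; under eq_bigr do rewrite eq_sym.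
by rewrite sum_nat_delta leqnn; case: ltnP => // /ltnW qp; rewrite upY.
Qed.

Lemma mmul1r X : strictly_upper X -> mmul X e = X.
Proof.
move=> upX; apply: mat_ext => p q; rewrite /mmul /e; under eq_bigr do rewrite mulrC.
by rewrite sum_nat_delta ltnSn andbT; case: leqP => // /ltnW qp; rewrite upX.
Qed.

Lemma strictly_upper_madd A B :
  strictly_upper A -> strictly_upper B -> strictly_upper (madd A B).
Proof. by move=> upA upB p q qp; rewrite /madd upA // upB // addr0. Qed.

Lemma strictly_upper_mopp A : strictly_upper A -> strictly_upper (mopp A).
Proof. by move=> upA p q qp; rewrite /mopp upA // oppr0. Qed.

Lemma strictly_upper_mmul A B : strictly_upper A -> strictly_upper (mmul A B).
Proof.
move=> upA p q qp; rewrite /mmul big1_seq // => r.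
by rewrite mem_index_iota => /andP[pr rq]; rewrite upA ?mul0r //; lia.
Qed.

Lemma mmul_e_add X Y : strictly_upper X -> strictly_upper Y ->
  mmul (madd e X) (madd e Y) = madd e (madd (madd X Y) (mmul X Y)).
Proof.
move=> upX upY; rewrite mmulDl !mmulDr mmul_e_e mmul1l // mmul1r //.
by apply: mat_ext => p q; rewrite /madd; ring.
Qed.

Lemma mmul_e_add_of_mul0 X Y :
  strictly_upper X -> strictly_upper Y -> mmul X Y = mzero ->
  mmul (madd e X) (madd e Y) = madd e (madd X Y).
Proof. by move=> upX upY XY; rewrite mmul_e_add // XY maddr0. Qed.

Lemma mpow_sq0 X m : strictly_upper X -> mmul X X = mzero -> mpow X m.+2 = mzero.
Proof.
move=> upX XX; elim: m => [|m IHm] /=; first by rewrite mmul1r.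
by move: IHm => /= ->; rewrite mmul0r.
Qed.

(* [minv] is the truncated Neumann series, which stops after two terms when X X = 0. *)
Lemma minv_e_add X : strictly_upper X -> mmul X X = mzero ->
  minv (madd e X) = madd e (mopp X).
Proof.
move=> upX XX; apply: mat_ext => p q; rewrite /minv.
have -> : (fun a b => e a b - madd e X a b) = mopp X.
  by apply: mat_ext => a b; rewrite /madd /mopp opprD addrA subrr add0r.
have upNX := strictly_upper_mopp upX.
have NXNX : mmul (mopp X) (mopp X) = mzero.
  by rewrite mmulNl mmulNr XX; apply: mat_ext => a b; rewrite /mopp /mzero opprK.
case: (leqP q p) => [qp|pq].
  have /eqP -> : (q - p == 0)%N by rewrite subn_eq0.
  by rewrite big_ord_recl big_ord0 /= /madd upNX // !addr0.
rewrite -(subnSK pq) big_ord_recl big_ord_recl big1 => [|i _]; last first.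
  by move: (mpow_sq0 i upNX NXNX) => /= ->.
by rewrite /= mmul1r // addr0.
Qed.

Lemma comm_e_add X Y :
  strictly_upper X -> strictly_upper Y -> mmul X X = mzero -> mmul Y Y = mzero ->
  comm (madd e X) (madd e Y) =
  madd e (fun p q => mmul X Y p q - mmul Y X p q + mmul (mmul Y X) Y p q
                     - mmul X (mmul Y X) p q + mmul X (mmul (mmul Y X) Y) p q).
Proof.
move=> upX upY XX YY.
have XXZ Z : mmul X (mmul X Z) = mzero by rewrite -mmulA XX mmul0l.
have YYZ Z : mmul Y (mmul Y Z) = mzero by rewrite -mmulA YY mmul0l.
have up_prod A B : strictly_upper A -> strictly_upper B ->
    strictly_upper (madd (madd A B) (mmul A B)).
  by move=> upA upB; do ![apply: strictly_upper_madd | apply: strictly_upper_mmul].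
rewrite /comm !minv_e_add // !mmul_e_add;
  do ?[apply: up_prod | apply: strictly_upper_mopp | assumption].
rewrite !(mmulDl, mmulDr, mmulNl, mmulNr, mmulA) ?XX ?YY ?XXZ ?YYZ ?mmul0r.
by congr madd; apply: mat_ext => p q; rewrite /madd /mopp /mzero; ring.
Qed.

Lemma strictly_upper_unit j l : (j < l)%N -> strictly_upper (unit_mx F j l).
Proof. by move=> jl p q qp; rewrite /unit_mx; case: eqP => // pj; case: eqP => // ql; lia. Qed.

Lemma mmul_unit_r X j l : strictly_upper X -> (j < l)%N ->
  mmul X (unit_mx F j l) = fun p q => (q == l)%:R * X p j.
Proof.
move=> upX jl; apply: mat_ext => p q; rewrite /mmul /unit_mx.
rewrite (eq_bigr (fun r => (r == j)%:R * ((q == l)%:R * X p r))) => [|r _]; last first.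
  by case: (r == j); case: (q == l); rewrite ?mulr0 ?mul0r ?mulr1 ?mul1r.
rewrite sum_nat_delta; case: (eqVneq q l) => [->|_]; last by rewrite !mul0r if_same.
have [jp|pj] := leqP j p; first by rewrite upX // mulr0 if_same.
by rewrite ifT 1?mulrC.
Qed.

Lemma mmul_unit_l X j l : strictly_upper X -> (j < l)%N ->
  mmul (unit_mx F j l) X = fun p q => (p == j)%:R * X l q.
Proof.
move=> upX jl; apply: mat_ext => p q; rewrite /mmul /unit_mx.
rewrite (eq_bigr (fun r => (r == l)%:R * ((p == j)%:R * X r q))) => [|r _]; last first.
  by case: (r == l); case: (p == j); rewrite ?mulr0 ?mul0r ?mulr1 ?mul1r.
rewrite sum_nat_delta; case: (eqVneq p j) => [->|_]; last by rewrite !mul0r if_same.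
have [ql|lq] := leqP q l; first by rewrite upX // mulr0 if_same.
by rewrite ifT.
Qed.

Lemma mmul_unit_sandwich X Y j l : strictly_upper X -> strictly_upper Y -> (j < l)%N ->
  mmul X (mmul (unit_mx F j l) Y) = fun p q => X p j * Y l q.
Proof.
move=> upX upY jl; rewrite mmul_unit_l //; apply: mat_ext => p q; rewrite /mmul.
under eq_bigr do rewrite mulrCA.
rewrite sum_nat_delta; have [jp|pj] := leqP j p; first by rewrite upX // mul0r if_same.
have [qj|jq] := leqP j q; first by rewrite ifT.
by rewrite upY ?mulr0 ?if_same.
Qed.

Lemma comm_e_add_t X j l : strictly_upper X -> mmul X X = mzero -> (j < l)%N ->
  comm (madd e X) (t j l 1) =
  madd e (fun p q => (q == l)%:R * X p j - (p == j)%:R * X l q - X p j * X l q).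
Proof.
move=> upX XX jl; have upS := strictly_upper_unit jl.
have -> : t j l 1 = madd e (unit_mx F j l) by apply: mat_ext => p q; rewrite /t /madd mul1r.
have SS : mmul (unit_mx F j l) (unit_mx F j l) = mzero.
  rewrite mmul_unit_r //; apply: mat_ext => p q.
  by rewrite /unit_mx /mzero (ltn_eqF jl) andbF mulr0.
have SXS : mmul (mmul (unit_mx F j l) X) (unit_mx F j l) = mzero.
  rewrite (mmul_unit_r (strictly_upper_mmul X upS) jl) (mmul_unit_l upX jl).
  by apply: mat_ext => p q; rewrite upX ?mulr0 // ltnW.
rewrite comm_e_add // SXS mmul0r mmul_unit_sandwich // mmul_unit_r // mmul_unit_l //.
by congr madd; apply: mat_ext => p q; rewrite /mzero; ring.
Qed.

Lemma t_0 i j : t i j 0 = e.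
Proof. by apply: mat_ext => p q; rewrite /t mul0r addr0. Qed.

End MatrixAlgebra.

Arguments mzero {F}.

Definition mcol (F : fieldType) (j : nat) (f : nat -> F) : mat F :=
  fun p q => (q == j)%:R * (if (0 < p < j)%N then f p else 0).

Definition single (F : fieldType) (i : nat) (a : F) : nat -> F :=
  fun p => if p == i then a else 0.

Ltac mcol_cases :=
  apply: mat_ext => p q; unfold madd, mopp, mzero, mcol, single, t, unit_mx, Defs.e;
  index_cases.

Lemma strictly_upper_mcol (F : fieldType) j (f : nat -> F) : strictly_upper (mcol j f).
Proof. by move=> p q qp; rewrite /mcol; index_cases; rewrite ?mul0r ?mulr0. Qed.

#[local] Hint Extern 0 (strictly_upper _) =>
  solve [do ![apply: strictly_upper_madd | apply: strictly_upper_mcol]] : core.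

Section ColumnMatrices.
Variable F : fieldType.
Local Notation mat := (mat F).
Local Notation e := (e F).

Lemma eq_mcol j (f g : nat -> F) : (forall p, (0 < p < j)%N -> f p = g p) -> mcol j f = mcol j g.
Proof. by move=> eq_fg; apply: mat_ext => p q; rewrite /mcol; case: ifP => // /eq_fg ->. Qed.

Lemma mcol0 j : mcol j (fun=> 0 : F) = mzero.
Proof. by apply: mat_ext => p q; rewrite /mcol if_same mulr0. Qed.

Lemma madd_mcol j (f g : nat -> F) : madd (mcol j f) (mcol j g) = mcol j (fun p => f p + g p).
Proof. by apply: mat_ext => p q; rewrite /madd /mcol; case: ifP => _; ring. Qed.

Lemma mmul_mcol0 j l (f g : nat -> F) :
  (l <= j)%N || (g j == 0) -> mmul (mcol j f) (mcol l g) = mzero.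
Proof.
move=> lj_or_gj; apply: mmul_eq0 => p r q; rewrite /mcol.
case: (eqVneq r j) => [->|_]; last by rewrite mulr0n !mul0r.
case/orP: lj_or_gj => [lj|/eqP->]; last by rewrite if_same !mulr0.
by rewrite [X in _ * (_ * X)]ifN ?mulr0 //; lia.
Qed.

Lemma t_mcol i j (a : F) : (0 < i < j)%N -> t i j a = madd e (mcol j (single i a)).
Proof. by move=> ij; mcol_cases; ring. Qed.

Lemma prod_t_mcol s a j (g : nat -> F) : (0 < s)%N -> (a <= j)%N ->
  \big[@mmul F/e]_(s <= i < a) t i j (g i) =
  madd e (mcol j (fun p => if (s <= p < a)%N then g p else 0)).
Proof.
move=> + aj; move: {2}(a - s)%N (erefl (a - s)%N) => d.
elim: d s => [|d IHd] s a_s s_gt0.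
  rewrite big_geq //.
  by rewrite (@eq_mcol _ _ (fun=> 0)) ?mcol0 ?maddr0 // => p _; index_cases.
rewrite big_ltn ?IHd ?t_mcol ?mmul_e_add ?mmul_mcol0 ?maddr0 ?madd_mcol ?leqnn //.
by congr madd; apply: eq_mcol => p _; rewrite /single; index_cases; ring.
Qed.

Variable n : ext_nat.

Lemma inrange_le i j : inrange n j -> (0 < i <= j)%N -> inrange n i.
Proof.
by rewrite /inrange; case: (n) => [m|] /andP[_ jm] /andP[-> ij] //=; apply: leq_trans jm.
Qed.

Definition supported_in_range (X : mat) : Prop :=
  forall p q, ~~ [&& (p < q)%N, inrange n p & inrange n q] -> X p q = 0.

Lemma isUT_e_add X : supported_in_range X -> isUT n (madd e X).
Proof.
move=> suppX; split=> [i | i j neq_ij out_ij]; rewrite /madd /e suppX ?ltnn ?addr0 //.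
  by rewrite eqxx.
by rewrite (negbTE neq_ij).
Qed.

Lemma supported_in_range_madd A B :
  supported_in_range A -> supported_in_range B -> supported_in_range (madd A B).
Proof. by move=> suppA suppB p q out_pq; rewrite /madd suppA // suppB // addr0. Qed.

Lemma supported_in_range_mcol j (f : nat -> F) : inrange n j -> supported_in_range (mcol j f).
Proof.
move=> jn p q out_pq; rewrite /mcol.
case: (eqVneq q j) => [qj|_]; last by rewrite mulr0n mul0r.
case: ifP => [/andP[p_gt0 pj]|_]; last by rewrite mulr0.
by rewrite qj pj jn (inrange_le jn) in out_pq.
Qed.

Lemma isUT_prod_t s a j (g : nat -> F) : (0 < s)%N -> (a <= j)%N -> inrange n j ->
  isUT n (\big[@mmul F/e]_(s <= i < a) t i j (g i)).
Proof.
by move=> s_gt0 aj jn; rewrite prod_t_mcol //; apply/isUT_e_add/supported_in_range_mcol.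
Qed.

Lemma isUT_t i j (a : F) : (0 < i < j)%N -> inrange n j -> isUT n (t i j a).
Proof. by move=> ij jn; rewrite t_mcol //; apply/isUT_e_add/supported_in_range_mcol. Qed.

End ColumnMatrices.

Ltac mcol_products_zero :=
  rewrite ?(mmulDl, mmulDr) ?mmul_mcol0 ?maddr0 //;
  unfold single; index_cases; rewrite ?eqxx ?orbT.

Lemma inrange_of_ext_le n m j : ext_le m n -> (0 < j <= m)%N -> inrange n j.
Proof. by case: n => [l|] /= ml /andP[j_gt0 jm]; rewrite /inrange j_gt0 //= (leq_trans jm). Qed.

Lemma inCenter_t (F : fieldType) n (c : mat F) K : inCenter n c -> ext_le K n ->
  exists m a, (K <= m)%N /\ c = t 1 m a.
Proof.
case: n => [m [a ->] Km | -> _] /=; first by exists m, a.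
by exists K, 0; rewrite t_0.
Qed.

Section CommutatorChain.
Variables (F : fieldType) (k : nat) (gamma : nat -> F).
Hypothesis k_ge2 : (2 <= k)%N.
Local Notation e := (e F).

Lemma comm_prod_t : gamma k = 0 ->
  comm (\big[@mmul F/e]_(1 <= i < k) t i k.+2 (gamma i)) (t k.+2 k.+3 1) =
  \big[@mmul F/e]_(1 <= i < k.+1) t i k.+3 (gamma i).
Proof.
move=> gk0; rewrite !prod_t_mcol // comm_e_add_t ?mmul_mcol0 ?leqnn //.
(* [index_cases] never splits on [p == k] here, so row k is singled out by hand. *)
by congr madd; mcol_cases; try (have -> : p = k by lia); rewrite ?gk0; ring.
Qed.

Definition y_mx : mat F :=
  mmul (t k.+1 k.+2 (- gamma k)) (\big[@mmul F/e]_(1 <= i < k) t i k (gamma i / gamma k)).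

Definition v_mx : mat F :=
  madd e (madd (mcol k.+1 (fun p => if (p < k)%N then gamma p / gamma k else 0))
               (mcol k.+2 (fun p => if (p <= k)%N then gamma p else 0))).

Lemma y_mx_e_add : y_mx =
  madd e (madd (mcol k.+2 (single k.+1 (- gamma k)))
               (mcol k (fun p => if (0 < p < k)%N then gamma p / gamma k else 0))).
Proof.
by rewrite /y_mx prod_t_mcol // t_mcol // mmul_e_add_of_mul0 //; mcol_products_zero.
Qed.

Lemma comm_y_mx_center_t m a : gamma k != 0 -> (k.+3 <= m)%N ->
  comm (mmul y_mx (t 1 m a)) (t k k.+1 1) = v_mx.
Proof.
move=> gk km; rewrite y_mx_e_add t_mcol // mmul_e_add_of_mul0 //; last by mcol_products_zero.
rewrite comm_e_add_t //; last by mcol_products_zero.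
by rewrite /v_mx; congr madd; mcol_cases; field.
Qed.

Lemma comm_y_mx_t : gamma k != 0 -> comm y_mx (t k k.+1 1) = v_mx.
Proof.
move=> gk; rewrite -(@comm_y_mx_center_t k.+3 0) // t_0 y_mx_e_add.
by rewrite mmulDl mmul_e_e mmul1r.
Qed.

Lemma comm_v_mx_t :
  comm v_mx (t k.+2 k.+3 1) = \big[@mmul F/e]_(1 <= i < k.+1) t i k.+3 (gamma i).
Proof.
rewrite /v_mx prod_t_mcol // comm_e_add_t //; last by mcol_products_zero.
by congr madd; mcol_cases; ring.
Qed.

Lemma isUT_y_mx n : inrange n k.+2 -> isUT n y_mx.
Proof.
move=> k2n; have kn : inrange n k by apply: inrange_le k2n _.
by rewrite y_mx_e_add; apply/isUT_e_add/supported_in_range_madd; apply: supported_in_range_mcol.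
Qed.

Lemma isUT_v_mx n : inrange n k.+2 -> isUT n v_mx.
Proof.
move=> k2n; have k1n : inrange n k.+1 by apply: inrange_le k2n _.
by apply/isUT_e_add/supported_in_range_madd; apply: supported_in_range_mcol.
Qed.

End CommutatorChain.

Theorem mainTheorem3 (F : fieldType) (n : ext_nat) (phi : mat F -> mat F)
  (k : nat) :
  PCmap n phi -> almost_identity n phi ->
  (2 <= k)%N -> ext_le (k + 3) n ->
  condZ phi k.-1 -> condY n phi k ->
  condZ phi k.
Proof.
move=> [_ [_ [_ phi_comm]]] phi_t k_ge2 kn Zprev Yk gamma /=.
rewrite addn3 in kn *.
have inr j : (0 < j <= k.+3)%N -> inrange n j by apply: inrange_of_ext_le.
have UT_t i j (a : F) : (0 < i < j)%N -> (j <= k.+3)%N -> isUT n (t i j a).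
  by move=> ij jk; apply: isUT_t; rewrite ?inr.
have phi_u : phi (t k.+2 k.+3 1) = t k.+2 k.+3 1 by apply: phi_t; rewrite ?inr.
have [gk0|gk] := eqVneq (gamma k) 0.
  have phi_z' := Zprev gamma; rewrite /= addn3 (prednK (ltnW k_ge2)) in phi_z'.
  rewrite -(comm_prod_t k_ge2 gk0) phi_comm ?phi_z' ?phi_u //; last exact: UT_t.
  by apply: isUT_prod_t; rewrite ?inr.
have [c [c_center phi_y]] := Yk (- gamma k) (fun i => gamma i / gamma k).
have {}phi_y : phi (y_mx k gamma) = mmul (y_mx k gamma) c := phi_y.
have [m [a [km c_t]]] := inCenter_t c_center kn.
have phi_v : phi (v_mx k gamma) = v_mx k gamma.
  rewrite -(comm_y_mx_t k_ge2 gk) phi_comm; last exact: UT_t.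
    by rewrite phi_y c_t phi_t ?inr // comm_y_mx_center_t // comm_y_mx_t.
  by apply: (isUT_y_mx _ k_ge2); rewrite inr.
rewrite -(comm_v_mx_t gamma k_ge2) phi_comm ?phi_v ?phi_u //; last exact: UT_t.
by apply: (isUT_v_mx _ k_ge2); rewrite inr.
Qed.
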